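(* Let $n\ge 4$ and let $T$ be a vertex of the Whitehouse complex $\Delta_n$. Then $\mathrm{link}_{\Delta_n}(\{T\})\cong \Delta_{|T|+1} * \Delta_{n-|T|+1}$ as simplicial complexes.
   Context: The Whitehouse complex $\Delta_n$ ($n\ge 3$) is the simplicial complex with vertex set $V_n=\{S\subseteq\{2,\dots,n\}: 2\le |S|\le n-2\}$, in which a subset $F\subseteq V_n$ is a face iff for all $S,T\in F$ one has $S\subseteq T$, $T\subseteq S$, or $S\cap T=\emptyset$. (So $\Delta_3=\{\emptyset\}$.) The link of a face $F$ in $\Delta$ is $\{G: F\cap G=\emptyset, F\cup G\in\Delta\}$. For complexes $\Delta,\Gamma$ on disjoint vertex sets, the join is $\Delta*\Gamma=\{F\cup G: F\in\Delta, G\in\Gamma\}$ (taking disjoint copies of vertex sets when needed). *)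

From mathcomp Require Import all_boot all_order.
Set Implicit Arguments. Unset Strict Implicit. Unset Printing Implicit Defensive.

(* {2,...,n} is realised inside 'I_n.+1 = {0,...,n} as the elements i >= 2. *)
Definition ground (n : nat) : {set 'I_n.+1} := [set i : 'I_n.+1 | 2 <= i].

Definition wh_vertex (n : nat) (S : {set 'I_n.+1}) : bool :=
  (S \subset ground n) && (2 <= #|S| <= n - 2).

Definition whitehouse (n : nat) : {set {set {set 'I_n.+1}}} :=
  [set F : {set {set 'I_n.+1}} |
     [forall S in F, wh_vertex S] &&
     [forall S in F, forall T in F,
        [|| S \subset T, T \subset S | [disjoint S & T]]]].

Definition link (V : finType) (K : {set {set V}}) (F : {set V}) : {set {set V}} :=
  [set G : {set V} | [disjoint F & G] && (F :|: G \in K)].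

Definition join (V1 V2 : finType) (K : {set {set V1}}) (L : {set {set V2}})
  : {set {set (V1 + V2)}} :=
  [set ((@inl V1 V2) @: (F : {set V1})) :|: ((@inr V1 V2) @: (G : {set V2})) | F in K, G in L].

Definition cverts (V : finType) (K : {set {set V}}) : {set V} :=
  \bigcup_(F in K) F.

Definition sc_iso (V1 V2 : finType) (K : {set {set V1}}) (L : {set {set V2}}) : Prop :=
  exists f : V1 -> V2,
    {in cverts K &, injective f} /\ L = [set f @: (F : {set V1}) | F in K].

(* A face of the link of T is a family of pairwise compatible vertices, each
   compatible with and different from T: so each of them is either a proper
   subset of T, or contains T, or is disjoint from T.  Relabelling T as
   {2, ..., |T| + 1} identifies the proper subsets of T of size at least 2 with
   the vertices of Delta_(|T|+1).  Contracting T to one of its points t0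
   identifies the remaining vertices with the subsets of size 2 .. n - |T| - 1
   of {t0} together with {2, ..., n} minus T, that is, with the vertices of
   Delta_(n-|T|+1).  Both identifications preserve inclusion and disjointness,
   hence compatibility, and every subset of T is compatible with every vertex
   of the second kind, so the link is the join of the two complexes. *)

From mathcomp Require Import all_boot all_order zify.
Set Implicit Arguments. Unset Strict Implicit. Unset Printing Implicit Defensive.

Definition compat (X : finType) (S S' : {set X}) : bool :=
  [|| S \subset S', S' \subset S | [disjoint S & S']].

Lemma compat_refl (X : finType) (S : {set X}) : compat S S.
Proof. by rewrite /compat subxx. Qed.

Lemma compatC (X : finType) (S S' : {set X}) : compat S S' = compat S' S.
Proof. by rewrite /compat disjoint_sym orbCA. Qed.

Lemma compat_subset_trans (X : finType) (S S' T : {set X}) :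
  S \subset T -> compat S' T -> ~~ (S' \subset T) -> compat S S'.
Proof.
move=> sST /or3P[S'T | TS' | dS'T] nS'T; first by rewrite S'T in nS'T.
  by rewrite /compat (subset_trans sST TS').
by rewrite /compat (disjointWl sST) ?orbT // disjoint_sym.
Qed.

Definition compat_monotone (X Y : finType) (V : pred {set X}) (phi : {set X} -> {set Y}) :=
  {in V &, forall S S' : {set X}, S \subset S' -> phi S \subset phi S'} /\
  {in V &, forall S S' : {set X}, [disjoint S & S'] -> [disjoint phi S & phi S']}.

Lemma compat_monotoneW (X Y : finType) (V : pred {set X}) (phi : {set X} -> {set Y}) :
  compat_monotone V phi -> {in V &, forall S S', compat S S' -> compat (phi S) (phi S')}.
Proof.
move=> [mono disj] S S' VS VS' /or3P[sub | sub | dis]; rewrite /compat.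
- by rewrite mono.
- by rewrite (mono S' S) ?orbT.
- by rewrite disj ?orbT.
Qed.

Section CompatComplex.
Variable X : finType.
Implicit Types (S : {set X}) (F G : {set {set X}}) (V : pred {set X}).

Definition compat_complex V : {set {set {set X}}} :=
  [set F : {set {set X}} | [forall S in F, V S] &&
     [forall S in F, forall S' in F, compat S S']].

Lemma compat_complexP V F :
  reflect ({in F, forall S, V S} /\ {in F &, forall S S' : {set X}, compat S S'})
          (F \in compat_complex V).
Proof.
rewrite inE; apply: (iffP andP) => [[/forall_inP FV /forall_inP Fc] | [FV Fc]].
  by split=> // S S' /Fc /forall_inP; apply.
by split; apply/forall_inP => // S FS; apply/forall_inP => S' FS'; apply: Fc.
Qed.

Lemma eq_compat_complex V V' : V =1 V' -> compat_complex V = compat_complex V'.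
Proof.
by move=> eqV; apply/setP => F; rewrite !inE (eq_forallb_in (fun S _ => eqV S)).
Qed.

Lemma cverts_compat_complex V S : S \in cverts (compat_complex V) -> V S.
Proof. by case/bigcupP => F /compat_complexP[FV _]; apply: FV. Qed.

Lemma link_compat_complex V T : V T ->
  link (compat_complex V) [set T] =
  compat_complex [pred S | [&& V S, S != T & compat S T]].
Proof.
move=> VT; apply/setP => G; rewrite inE disjoints1.
apply/andP/compat_complexP => [[TG /compat_complexP[FV Fc]] | [GV Gc]].
  have inTG S : S \in G -> S \in [set T] :|: G by move=> GS; rewrite inE GS orbT.
  have TinTG : T \in [set T] :|: G by rewrite !inE eqxx.
  split=> [S GS | S S' GS GS']; last exact: Fc (inTG _ GS) (inTG _ GS').
  rewrite /= FV ?inTG // (Fc S T (inTG _ GS) TinTG) andbT.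
  by apply: contraNneq TG => <-.
split.
  by apply/negP => /GV /and3P[_ /eqP].
apply/compat_complexP; split=> [S | S S'].
  by rewrite !inE => /predU1P[-> // | /GV/and3P[]].
rewrite !inE => /predU1P[-> | GS] /predU1P[-> | GS'].
- exact: compat_refl.
- by rewrite compatC; case/and3P: (GV S' GS').
- by case/and3P: (GV S GS).
- exact: Gc.
Qed.

Lemma compat_complex_predU (W1 W2 : pred {set X}) :
  (forall S S', W1 S -> W2 S' -> compat S S') ->
  compat_complex [predU W1 & W2] =
  [set G1 :|: G2 | G1 in compat_complex W1, G2 in compat_complex W2].
Proof.
move=> W12; apply/setP => G; apply/idP/imset2P.
  case/compat_complexP => GW Gc.
  exists [set S in G | W1 S] [set S in G | ~~ W1 S].
  - apply/compat_complexP; split=> [S | S S']; rewrite !inE => /andP[GS W1S] //.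
    by case/andP=> GS' _; apply: Gc.
  - apply/compat_complexP; split=> [S | S S']; rewrite !inE => /andP[GS W1S] //.
      by case/orP: (GW S GS) => // /(negP W1S).
    by case/andP=> GS' _; apply: Gc.
  - by apply/setP => S; rewrite !inE -andb_orr orbN andbT.
case=> G1 G2 /compat_complexP[G1W G1c] /compat_complexP[G2W G2c] ->.
apply/compat_complexP; split=> [S | S S'].
  by rewrite inE => /orP[/G1W W1S | /G2W W2S]; apply/orP; [left | right].
rewrite !inE => /orP[G1S | G2S] /orP[G1S' | G2S'].
- exact: G1c.
- exact: W12 (G1W S G1S) (G2W S' G2S').
- by rewrite compatC; apply: W12 (G1W S' G1S') (G2W S G2S).
- exact: G2c.
Qed.

End CompatComplex.

Definition compat_iso (X Y : finType) (VX : pred {set X}) (VY : pred {set Y})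
    (phi : {set X} -> {set Y}) : Prop :=
  [/\ {in VX &, injective phi}, {in VX, forall S, VY (phi S)},
      forall U, VY U -> exists2 S, VX S & phi S = U
    & {in VX &, forall S S', compat (phi S) (phi S') = compat S S'}].

Lemma compat_iso_inverse (X Y : finType) (VX : pred {set X}) (VY : pred {set Y})
    (phi : {set X} -> {set Y}) (psi : {set Y} -> {set X}) :
  {in VX, forall S, VY (phi S)} -> {in VY, forall U, VX (psi U)} ->
  {in VX, cancel phi psi} -> {in VY, cancel psi phi} ->
  compat_monotone VX phi -> compat_monotone VY psi -> compat_iso VX VY phi.
Proof.
move=> phiV psiV phiK psiK /compat_monotoneW phic /compat_monotoneW psic.
split=> // [S S' VS VS' eq_phi | U VU | S S' VS VS'].
- by rewrite -(phiK S VS) eq_phi phiK.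
- by exists (psi U); rewrite ?psiV ?psiK.
apply/idP/idP; last exact: phic.
by move=> c; rewrite -(phiK S VS) -(phiK S' VS'); apply: psic => //; apply: phiV.
Qed.

Lemma compat_iso_comp (X Y Z : finType) (VX : pred {set X}) (VY : pred {set Y})
    (VZ : pred {set Z}) (phi : {set X} -> {set Y}) (chi : {set Y} -> {set Z}) :
  compat_iso VX VY phi -> compat_iso VY VZ chi -> compat_iso VX VZ (chi \o phi).
Proof.
move=> [phi_inj phiV phi_onto phic] [chi_inj chiV chi_onto chic].
split=> [S S' VS VS' /= eq_chi | S VS | W VW | S S' VS VS' /=].
- by apply: phi_inj => //; apply: chi_inj => //; apply: phiV.
- exact/chiV/phiV.
- have [U VU <-] := chi_onto W VW; have [S VS <-] := phi_onto U VU.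
  by exists S.
- by rewrite chic ?phic //; apply: phiV.
Qed.

Lemma imset_compat_complex (X Y : finType) (VX : pred {set X}) (VY : pred {set Y})
    (phi : {set X} -> {set Y}) :
  compat_iso VX VY phi ->
  [set phi @: (G : {set {set X}}) | G in compat_complex VX] = compat_complex VY.
Proof.
move=> [_ phiV phi_onto phic]; apply/setP => H; apply/imsetP/compat_complexP.
  case=> G /compat_complexP[GV Gc] ->; split=> [U /imsetP[S GS ->] | U U'].
    exact/phiV/GV.
  case/imsetP=> S GS -> /imsetP[S' GS' ->].
  by rewrite phic; [apply: Gc | apply: GV | apply: GV].
case=> HV Hc; exists [set S | VX S && (phi S \in H)].
  apply/compat_complexP; split=> [S | S S']; rewrite inE => /andP[VS HS] //.
  by rewrite inE => /andP[VS' HS']; rewrite -phic //; apply: Hc.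
apply/setP => U; apply/idP/imsetP => [HU | [S]].
  have [S VS phiS] := phi_onto U (HV U HU).
  by exists S; rewrite // inE VS phiS.
by rewrite inE => /andP[_ HS] ->.
Qed.

Lemma sc_iso_compat_complex_predU (X Y1 Y2 : finType) (W1 W2 : pred {set X})
    (V1 : pred {set Y1}) (V2 : pred {set Y2})
    (phi1 : {set X} -> {set Y1}) (phi2 : {set X} -> {set Y2}) :
  (forall S, W2 S -> ~~ W1 S) -> (forall S S', W1 S -> W2 S' -> compat S S') ->
  compat_iso W1 V1 phi1 -> compat_iso W2 V2 phi2 ->
  sc_iso (compat_complex [predU W1 & W2])
         (join (compat_complex V1) (compat_complex V2)).
Proof.
move=> W21 W12 iso1 iso2; have [inj1 _ _ _] := iso1; have [inj2 _ _ _] := iso2.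
pose f S := if S \in W1 then inl (phi1 S) else inr (phi2 S).
have fE G1 G2 : G1 \in compat_complex W1 -> G2 \in compat_complex W2 ->
    f @: (G1 :|: G2) = inl @: (phi1 @: G1) :|: inr @: (phi2 @: G2).
  move=> /compat_complexP[G1W _] /compat_complexP[G2W _].
  rewrite imsetU -!imset_comp; congr (_ :|: _); apply: eq_in_imset => S GS /=.
    by rewrite /f ifT //; apply: G1W.
  by rewrite /f ifF //; apply/negbTE/W21/G2W.
exists f; split.
  move=> S S' /cverts_compat_complex WS /cverts_compat_complex WS'.
  rewrite /f; case: ifP => W1S; case: ifP => W1S' // [eq_phi].
    exact: inj1.
  by apply: inj2; [move: WS | move: WS' | ]; rewrite /= ?W1S ?W1S'.
rewrite compat_complex_predU // -(imset_compat_complex iso1) -(imset_compat_complex iso2).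
apply/setP => H; apply/imset2P/imsetP.
  case=> _ _ /imsetP[G1 hG1 ->] /imsetP[G2 hG2 ->] ->.
  by exists (G1 :|: G2); [apply: imset2_f | rewrite fE].
case=> _ /imset2P[G1 G2 hG1 hG2 ->] ->.
by exists (phi1 @: G1) (phi2 @: G2); rewrite ?fE // imset_f.
Qed.

Lemma card_ground m : #|ground m| = m - 1.
Proof.
case: m => [|m]; first by rewrite -sum1_card big_mkcond big_ord1 inE.
rewrite -sum1_card big_mkcond !big_ord_recl !inE /=.
by rewrite (eq_bigr (fun _ => 1)) ?sum1_card ?card_ord ?subn1 // => i; rewrite inE.
Qed.

Lemma exists_inj_onto (X Y : finType) (y0 : Y) (A : {set X}) (B : {set Y}) :
  #|A| = #|B| -> exists g : X -> Y, {in A &, injective g} /\ g @: A = B.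
Proof.
move=> eq_card; pose g x := nth y0 (enum B) (index x (enum A)).
have ltA x : x \in A -> index x (enum A) < size (enum B).
  by move=> xA; rewrite -cardE -eq_card cardE index_mem mem_enum.
have g_inj : {in A &, injective g}.
  move=> x x' xA x'A /eqP; rewrite /g nth_uniq ?ltA ?enum_uniq // => /eqP eq_idx.
  by rewrite -(nth_index x (s := enum A) (x := x)) ?mem_enum // eq_idx nth_index ?mem_enum.
exists g; split=> //; apply/eqP; rewrite eqEcard card_in_imset // eq_card leqnn andbT.
by apply/subsetP => _ /imsetP[x xA ->]; rewrite -mem_enum mem_nth // ltA.
Qed.

Section Relabel.
Variables (X : finType) (m : nat) (A : {set X}) (g : X -> 'I_m.+1).
Hypotheses (g_inj : {in A &, injective g}) (gA : g @: A = ground m).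

Let g_inj_sub (S : {set X}) : S \subset A -> {in S &, injective g}.
Proof. by move/subsetP => sSA; apply: sub_in2 g_inj. Qed.

Let preimK (S : {set X}) : S \subset A -> A :&: g @^-1: (g @: S) = S.
Proof.
move=> sSA; apply/setP => x; rewrite !inE; apply/andP/idP => [[xA /imsetP[x' xS' eq_g]] | xS].
  by rewrite (g_inj xA (subsetP sSA _ xS') eq_g).
by rewrite (subsetP sSA) ?imset_f.
Qed.

Let imset_preimK (U : {set 'I_m.+1}) : U \subset ground m -> g @: (A :&: g @^-1: U) = U.
Proof.
rewrite -gA => /subsetP sU; apply/setP => y; apply/imsetP/idP => [[x] | yU].
  by rewrite !inE => /andP[_ ?] ->.
by have /imsetP[x xA eq_y] := sU _ yU; exists x; rewrite // !inE xA -eq_y.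
Qed.

Lemma compat_iso_relabel :
  compat_iso [pred S : {set X} | (S \subset A) && (2 <= #|S| <= m - 2)] (@wh_vertex m)
             (fun S => g @: S).
Proof.
apply: (compat_iso_inverse (psi := fun U => A :&: g @^-1: U)).
- move=> S /andP[sSA card_S]; rewrite /wh_vertex -gA imsetS //=.
  by rewrite card_in_imset //; apply: g_inj_sub.
- move=> U /andP[sU card_U]; rewrite /= subsetIl /=.
  by rewrite -(card_in_imset (g_inj_sub (subsetIl _ _))) imset_preimK.
- by move=> S /andP[sSA _]; apply: preimK.
- by move=> U /andP[sU _]; apply: imset_preimK.
- split=> S S' /andP[sSA _] /andP[sS'A _]; first exact: imsetS.
  move=> dS; rewrite -setI_eq0; apply/eqP/setP => y; rewrite !inE.
  apply/negP => /andP[/imsetP[x xS ->] /imsetP[x' xS' eq_g]].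
  move: eq_g => /g_inj -/(_ (subsetP sSA _ xS) (subsetP sS'A _ xS')) eq_x.
  by rewrite -eq_x (disjointFr dS xS) in xS'.
- split=> U U' _ _ => [sU | dU]; first by rewrite setIS ?preimsetS.
  by rewrite -setI_eq0 setIACA setIid -preimsetI (disjoint_setI0 dU) preimset0 setI0.
Qed.

End Relabel.

Section Contraction.
Variables (n : nat) (T : {set 'I_n.+1}) (t0 : 'I_n.+1).
Hypotheses (vT : wh_vertex T) (t0T : t0 \in T).
Implicit Types U S : {set 'I_n.+1}.

(* T is contracted to its point t0: S corresponds to S :&: contract_ground, and
   expand blows t0 back up to T. *)
Definition contract_ground : {set 'I_n.+1} := t0 |: (ground n :\: T).

Definition expand U : {set 'I_n.+1} := [set x | if x \in T then t0 \in U else x \in U].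

Let T_ground : T \subset ground n. Proof. by case/andP: vT. Qed.
Let card_T : 2 <= #|T| <= n - 2. Proof. by case/andP: vT. Qed.

Lemma card_contract_ground : #|contract_ground| = n - #|T|.
Proof.
rewrite cardsU1 !inE t0T cardsD card_ground (setIidPr T_ground) /=.
(* Generalizing the cardinals identifies their convertible but syntactically
   different elaborations, which lia would otherwise treat as distinct atoms. *)
by have := card_T; move: #|T| => k; lia.
Qed.

Lemma expandS U U' : U \subset U' -> expand U \subset expand U'.
Proof. by move/subsetP => sU; apply/subsetP => x; rewrite !inE; case: ifP => _; apply: sU. Qed.

Lemma expand_disjoint U U' : [disjoint U & U'] -> [disjoint expand U & expand U'].
Proof.
move=> dU; rewrite -setI_eq0; apply/eqP/setP => x; rewrite !inE.
by case: ifP => _; apply/negP => /andP[xU]; rewrite (disjointFr dU xU).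
Qed.

Lemma expand1 : expand [set t0] = T.
Proof.
apply/setP => x; rewrite !inE eqxx; case: ifP => // xT.
by apply: contraFF xT => /eqP ->.
Qed.

Lemma expandK U : U \subset contract_ground -> expand U :&: contract_ground = U.
Proof.
move/subsetP => sU; apply/setP => x; rewrite in_setI [x \in expand U]inE.
case xX: (x \in contract_ground); last by rewrite andbF; apply/esym/negP => /sU; rewrite xX.
by move: xX; rewrite andbT !inE => /predU1P[-> | /andP[/negPf -> _]]; rewrite ?t0T.
Qed.

Lemma expand_subsetE U U' : U \subset contract_ground -> U' \subset contract_ground ->
  (expand U \subset expand U') = (U \subset U').
Proof.
move=> sU sU'; apply/idP/idP; last exact: expandS.
by rewrite -{2}(expandK sU) -{2}(expandK sU'); apply: setSI.
Qed.

Lemma expand_ground U : U \subset contract_ground -> expand U \subset ground n.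
Proof.
move/subsetP => sU; apply/subsetP => x; rewrite inE; case: ifP => [xT _ | xT /sU].
  exact: subsetP T_ground x xT.
by rewrite !inE xT => /predU1P[eq_x | /andP[]//]; rewrite eq_x t0T in xT.
Qed.

Lemma compat_expand U : compat (expand U) T.
Proof.
rewrite /compat -expand1; case t0U: (t0 \in U).
  by rewrite (@expandS [set t0]) ?orbT // sub1set.
by rewrite expand_disjoint ?orbT // disjoint_sym disjoints1 t0U.
Qed.

Lemma card_expand U : U \subset contract_ground ->
  #|expand U| = #|U| + (t0 \in U) * (#|T| - 1).
Proof.
move=> sU; rewrite -(cardsID contract_ground) expandK //; congr (_ + _).
have -> : expand U :\: contract_ground = [set x in T :\ t0 | t0 \in U].
  apply/setP => x; rewrite !inE; case: ifP => xT /=; first by rewrite orbF andbT.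
  case xU: (x \in U); rewrite ?andbF //.
  by move: (subsetP sU x xU); rewrite !inE xT /= => ->.
case: (t0 \in U); last first.
  by apply/eqP; rewrite cards_eq0; apply/eqP/setP => x; rewrite !inE andbF.
rewrite mul1n (cardsD1 t0 T) t0T add1n subn1 /=.
by apply: eq_card => x; rewrite !inE andbT.
Qed.

Lemma expandE S : S \subset ground n -> compat S T -> ~~ (S \subset T) ->
  expand (S :&: contract_ground) = S.
Proof.
move=> /subsetP sSG cST nST; have TS_or_dis : (T \subset S) || [disjoint S & T].
  by move: cST; rewrite /compat (negPf nST).
apply/setP => x; rewrite !inE eqxx /=; case: ifP => xT; last first.
  by case xS: (x \in S) => //=; move: (sSG _ xS); rewrite inE xT /= => ->; rewrite orbT.
case/orP: TS_or_dis => [/subsetP TS | ]; first by rewrite !TS.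
by rewrite disjoint_sym => dTS; rewrite !(disjointFr dTS).
Qed.

Lemma expand_vertexE U : U \subset contract_ground ->
  [&& wh_vertex (expand U), compat (expand U) T & ~~ (expand U \subset T)] =
  (2 <= #|U| <= n - #|T| + 1 - 2).
Proof.
move=> sU; have card_eU := card_expand sU.
have t0X : t0 \in contract_ground by rewrite !inE eqxx.
have subT : (expand U \subset T) = (U \subset [set t0]).
  by rewrite -expand1 expand_subsetE // sub1set.
rewrite /wh_vertex expand_ground // compat_expand subT /=.
rewrite subset1 eq_sym eqEcard sub1set cards1 -cards_eq0.
case t0U: (t0 \in U) card_eU => /= card_eU.
  have : 0 < #|U| by apply/card_gt0P; exists t0.
  by rewrite card_eU; have := card_T; move: #|T| #|U| => k u; lia.
have : #|U| <= #|contract_ground :\ t0|.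
  by apply: subset_leq_card; rewrite subsetD1 sU t0U.
have := cardsD1 t0 contract_ground; rewrite t0X add1n card_contract_ground card_eU.
by have := card_T; move: #|T| #|U| #|contract_ground :\ t0| => k u c; lia.
Qed.

Lemma compat_iso_contract :
  compat_iso
    [pred S : {set _} | [&& wh_vertex S, compat S T & ~~ (S \subset T)]]
    [pred U : {set _} | (U \subset contract_ground) && (2 <= #|U| <= n - #|T| + 1 - 2)]
    (fun S => S :&: contract_ground).
Proof.
apply: (compat_iso_inverse (psi := expand)).
- move=> S /and3P[vS cST nST]; have sSG : S \subset ground n by case/andP: vS.
  by rewrite /= subsetIr -expand_vertexE ?subsetIr // expandE // vS cST nST.
- by move=> U /andP[sU card_U]; rewrite /= expand_vertexE.
- by move=> S /and3P[/andP[sSG _] cST nST]; apply: expandE.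
- by move=> U /andP[sU _]; apply: expandK.
- split=> S S' _ _ => [sS | dS]; first exact: setSI.
  by rewrite -setI_eq0 setIACA (disjoint_setI0 dS) set0I.
- by split=> U U' _ _; [apply: expandS | apply: expand_disjoint].
Qed.

End Contraction.

Lemma whitehouseE n : whitehouse n = compat_complex (@wh_vertex n).
Proof. by []. Qed.

Lemma link_vertexE n (T : {set 'I_n.+1}) : wh_vertex T ->
  [pred S | [&& wh_vertex S, S != T & compat S T]] =1
  [predU [pred S : {set _} | (S \subset T) && (2 <= #|S| <= #|T| + 1 - 2)]
       & [pred S | [&& wh_vertex S, compat S T & ~~ (S \subset T)]]].
Proof.
case/andP=> T_ground card_T S; rewrite /= !inE.
case: (boolP (S \subset T)) => [sST | nST] /=.
  have := subset_leq_card sST; rewrite /compat sST /wh_vertex (subset_trans sST T_ground).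
  rewrite eqEcard sST /= !andbT; move: card_T.
  by move: #|S| #|T| => s k; lia.
have nT : S != T by apply: contraNneq nST => ->.
by rewrite nT /= andbT.
Qed.

Theorem mainTheorem2 (n : nat) (T : {set 'I_n.+1}) :
  4 <= n -> wh_vertex T ->
  sc_iso (link (whitehouse n) [set T])
         (join (whitehouse (#|T| + 1)) (whitehouse (n - #|T| + 1))).
Proof.
move=> _ vT. (* 4 <= n is implied by wh_vertex T. *)
have [t0 t0T] : exists t0, t0 \in T.
  by apply/set0Pn; rewrite -card_gt0; case/andP: vT => _ /andP[/ltnW].
have card_T : #|T| = #|ground (#|T| + 1)| by rewrite card_ground addnK.
have card_X : #|contract_ground T t0| = #|ground (n - #|T| + 1)|.
  by rewrite card_ground addnK card_contract_ground.
have [g1 [g1_inj g1T]] := exists_inj_onto ord0 card_T.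
have [g2 [g2_inj g2X]] := exists_inj_onto ord0 card_X.
rewrite !whitehouseE link_compat_complex // (eq_compat_complex (link_vertexE vT)).
apply: sc_iso_compat_complex_predU.
- by move=> S /and3P[_ _ nST]; rewrite /= (negPf nST).
- by move=> S S' /andP[sST _] /and3P[_ cS'T nS'T]; apply: compat_subset_trans sST cS'T nS'T.
- exact: compat_iso_relabel g1_inj g1T.
- exact: compat_iso_comp (compat_iso_contract vT t0T) (compat_iso_relabel g2_inj g2X).
Qed.
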